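(* Let $N,d\ge1$, $T>0$, $n\ge 2$, and let $x^n=(x^n_1,\dots,x^n_N)$, $v^n=\dot x^n$ be the solution on $[0,T]$ of the system $\dot x^n_i=v^n_i$, $\dot v^n_i=\frac1N\sum_{k=1}^N(v^n_k-v^n_i)\psi_n(|x^n_i-x^n_k|)$, $i=1,\dots,N$, with initial data $x^n(0),v^n(0)$. Then: 1. $x^n$ is $C^\infty$ in a neighborhood of every time $t$ such that $|x^n_i(t)-x^n_j(t)|>0$ for all $i\ne j$. 2. The average velocity $\frac1N\sum_{i=1}^N v^n_i(t)$ is constant in $t$. 3. There is a constant $M(n)$ with $\|v^n_i\|_{L^\infty([0,T])}\le M(n)$ for all $i$. 4. If the initial data $x^n(0),v^n(0)$ are bounded uniformly in $n$, then there is a constant $M$ independent of $n$ with $\|v^n_i\|_{L^\infty([0,T])}\le M$ for all $i$ and all $n$. 5. $|\dot v^n_i|\le 2M(n)n$. 6. If for some $t$ and some $i,j$ we have $x^n_i(t)=x^n_j(t)$ and $v^n_i(t)=v^n_j(t)$, then $x^n_i\equiv x^n_j$ on $[t,T]$. 7. If at some time $t$ we have $v^n_i(t)=v^n_j(t)$ for all $i,j$, then $v^n$ is constant on $[t,T]$.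
   Context: Let $\alpha\in(0,1)$ and $\psi(s)=s^{-\alpha}$ for $s>0$, $\psi(0)=0$. For each $n$, $\psi_n:[0,\infty)\to[0,\infty)$ is defined by $\psi_n(s)=\psi(s)$ for $s\ge (n-1)^{-1/\alpha}$, $\psi_n(s)=n$ for $s\le n^{-1/\alpha}$, and $\psi_n$ smooth and monotone on $[n^{-1/\alpha},(n-1)^{-1/\alpha}]$. For such smooth bounded weights the system has a unique global classical $C^2$ solution. *)

From Stdlib Require Import Reals.
From Coquelicot Require Import Coquelicot.
Open Scope R_scope.

Fixpoint rsum (n : nat) (f : nat -> R) : R :=
  match n with
  | O => 0
  | S m => rsum m f + f m
  end.

Definition enorm (d : nat) (u : nat -> R) : R :=
  sqrt (rsum d (fun l => u l ^ 2)).

(* p is an admissible truncated weight psi_n for psi(s) = s^(-alpha):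
   psi_n = psi on [(n-1)^(-1/alpha), oo), psi_n = n on [0, n^(-1/alpha)],
   monotone on [n^(-1/alpha), (n-1)^(-1/alpha)], and smooth. *)
Definition is_psi_n (alpha : R) (n : nat) (p : R -> R) : Prop :=
  (forall s, Rpower (INR n - 1) (- / alpha) <= s -> p s = Rpower s (- alpha)) /\
  (forall s, 0 <= s <= Rpower (INR n) (- / alpha) -> p s = INR n) /\
  ((forall s1 s2, Rpower (INR n) (- / alpha) <= s1 -> s1 <= s2 ->
                  s2 <= Rpower (INR n - 1) (- / alpha) -> p s2 <= p s1) \/
   (forall s1 s2, Rpower (INR n) (- / alpha) <= s1 -> s1 <= s2 ->
                  s2 <= Rpower (INR n - 1) (- / alpha) -> p s1 <= p s2)) /\
  (forall s, 0 < s -> forall k, ex_derive_n p k s).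

(* x i l t : l-th coordinate of particle i at time t; similarly v. *)
Definition accel (N d : nat) (psi : R -> R) (x v : nat -> nat -> R -> R)
  (i l : nat) (t : R) : R :=
  / INR N * rsum N (fun k =>
     (v k l t - v i l t) * psi (enorm d (fun m => x i m t - x k m t))).

(* classical solution of the system on [0,T]: ODEs hold on (0,T),
   x and v continuous on [0,T] (so initial data x(0), v(0) are attained). *)
Definition is_solution (N d : nat) (T : R) (psi : R -> R)
  (x v : nat -> nat -> R -> R) : Prop :=
  (forall i l, (i < N)%nat -> (l < d)%nat -> forall t, 0 < t < T ->
     is_derive (x i l) t (v i l t) /\
     is_derive (v i l) t (accel N d psi x v i l t)) /\
  (forall i l, (i < N)%nat -> (l < d)%nat -> forall t, 0 <= t <= T ->
     filterlim (x i l) (within (fun s => 0 <= s <= T) (locally t)) (locally (x i l t)) /\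
     filterlim (v i l) (within (fun s => 0 <= s <= T) (locally t)) (locally (v i l t))).

(* Each velocity coordinate obeys a maximum principle (a Gronwall estimate on the squared
   excess over a level), so velocities stay bounded by their initial values uniformly in [n]
   and accelerations by [2 M n]; it also makes an initial consensus persist. Forces between two
   particles cancel, so the mean velocity is conserved. Two particles that meet with equal
   velocities stay together, by Gronwall applied to their relative position and velocity, using
   that [psi_n] is Lipschitz. Away from collisions the vector field is smooth, hence so is the
   solution. *)

From Stdlib Require Import Reals Lra Lia Psatz.
From Coquelicot Require Import Coquelicot.
Open Scope R_scope.

Lemma rsum_ext n F G : (forall k, (k < n)%nat -> F k = G k) -> rsum n F = rsum n G.
Proof.
  induction n as [|n IH]; intros H; simpl; auto.
  rewrite IH, H by (try intros; try apply H; lia); reflexivity.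
Qed.

Lemma rsum_plus n F G : rsum n (fun k => F k + G k) = rsum n F + rsum n G.
Proof. induction n; simpl; [lra|]. rewrite IHn; lra. Qed.

Lemma rsum_minus n F G : rsum n (fun k => F k - G k) = rsum n F - rsum n G.
Proof. induction n; simpl; [lra|]. rewrite IHn; lra. Qed.

Lemma rsum_scal n c F : rsum n (fun k => c * F k) = c * rsum n F.
Proof. induction n; simpl; [lra|]. rewrite IHn; lra. Qed.

Lemma rsum_const n c : rsum n (fun _ => c) = INR n * c.
Proof. induction n; [simpl; lra|]. rewrite S_INR; simpl rsum. rewrite IHn; lra. Qed.

Lemma rsum_le n F G : (forall k, (k < n)%nat -> F k <= G k) -> rsum n F <= rsum n G.
Proof.
  induction n as [|n IH]; intros H; simpl; [lra|].
  assert (rsum n F <= rsum n G) by (apply IH; intros; apply H; lia).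
  assert (F n <= G n) by (apply H; lia). lra.
Qed.

Lemma rsum_nonneg n F : (forall k, (k < n)%nat -> 0 <= F k) -> 0 <= rsum n F.
Proof.
  intros H. replace 0 with (rsum n (fun _ => 0)) by (rewrite rsum_const; ring).
  now apply rsum_le.
Qed.

Lemma rsum_term_le n F j : (forall k, (k < n)%nat -> 0 <= F k) -> (j < n)%nat -> F j <= rsum n F.
Proof.
  induction n as [|n IH]; intros H Hj; simpl; [lia|].
  destruct (Nat.eq_dec j n) as [->|Hjn].
  - assert (0 <= rsum n F) by (apply rsum_nonneg; intros; apply H; lia). lra.
  - assert (F j <= rsum n F) by (apply IH; [intros; apply H|]; lia).
    assert (0 <= F n) by (apply H; lia). lra.
Qed.

Lemma rsum_exchange n m F :
  rsum n (fun i => rsum m (fun k => F i k)) = rsum m (fun k => rsum n (fun i => F i k)).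
Proof. induction n; simpl; [rewrite rsum_const; lra|]. now rewrite IHn, <- rsum_plus. Qed.

Lemma Rabs_rsum_le n F c : (forall k, (k < n)%nat -> Rabs (F k) <= c) -> Rabs (rsum n F) <= INR n * c.
Proof.
  induction n as [|n IH]; intros H; [simpl; rewrite Rabs_R0; lra|].
  rewrite S_INR; simpl rsum.
  assert (Rabs (rsum n F) <= INR n * c) by (apply IH; intros; apply H; lia).
  assert (Rabs (F n) <= c) by (apply H; lia).
  pose proof (Rabs_triang (rsum n F) (F n)). lra.
Qed.

(* Interaction forces cancel pairwise, so the total momentum is conserved. *)
Lemma rsum_rsum_diff_sym n (w : nat -> R) (c : nat -> nat -> R) :
  (forall i k, (i < n)%nat -> (k < n)%nat -> c i k = c k i) ->
  rsum n (fun i => rsum n (fun k => (w k - w i) * c i k)) = 0.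
Proof.
  intros Hc.
  rewrite (rsum_ext n _ (fun i => rsum n (fun k => w k * c i k) - rsum n (fun k => w i * c i k))).
  2: { intros i _. rewrite <- rsum_minus. apply rsum_ext. intros; ring. }
  rewrite rsum_minus, (rsum_exchange n n (fun i k => w k * c i k)).
  rewrite (rsum_ext n (fun k => rsum n (fun i => w k * c i k)) (fun k => rsum n (fun i => w k * c k i))).
  - ring.
  - intros k Hk. apply rsum_ext. intros i Hi. now rewrite Hc.
Qed.

Lemma finite_abs_bound n m (F : nat -> nat -> R) :
  exists B, 0 <= B /\ forall i l, (i < n)%nat -> (l < m)%nat -> Rabs (F i l) <= B.
Proof.
  exists (rsum n (fun i => rsum m (fun l => Rabs (F i l)))). split.
  - apply rsum_nonneg; intros; apply rsum_nonneg; intros; apply Rabs_pos.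
  - intros i l Hi Hl.
    apply Rle_trans with (rsum m (fun l => Rabs (F i l))).
    + apply (rsum_term_le m (fun l => Rabs (F i l))); auto. intros; apply Rabs_pos.
    + apply (rsum_term_le n (fun i => rsum m (fun l => Rabs (F i l)))); auto.
      intros; apply rsum_nonneg; intros; apply Rabs_pos.
Qed.

Lemma rsum_sqr_nonneg d u : 0 <= rsum d (fun l => u l ^ 2).
Proof. apply rsum_nonneg; intros; apply pow2_ge_0. Qed.

Lemma enorm_ge0 d u : 0 <= enorm d u.
Proof. apply sqrt_pos. Qed.

Lemma enorm_sqr d u : enorm d u ^ 2 = rsum d (fun l => u l ^ 2).
Proof. apply pow2_sqrt, rsum_sqr_nonneg. Qed.

Lemma enorm_ext d u w : (forall l, (l < d)%nat -> u l = w l) -> enorm d u = enorm d w.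
Proof. intros H. unfold enorm. f_equal. apply rsum_ext. intros l Hl. now rewrite H. Qed.

Lemma enorm_diff_sym d a b : enorm d (fun l => a l - b l) = enorm d (fun l => b l - a l).
Proof. unfold enorm. f_equal. apply rsum_ext. intros; ring. Qed.

Lemma Rabs_coord_le_enorm d u l : (l < d)%nat -> Rabs (u l) <= enorm d u.
Proof.
  intros Hl. unfold enorm. rewrite <- sqrt_Rsqr_abs. apply sqrt_le_1_alt.
  rewrite Rsqr_pow2. apply (rsum_term_le d (fun l => u l ^ 2)); auto.
  intros; apply pow2_ge_0.
Qed.

Lemma enorm_le_coord_bound d u K : 0 <= K ->
  (forall l, (l < d)%nat -> Rabs (u l) <= K) -> enorm d u <= sqrt (INR d) * K.
Proof.
  intros HK H. unfold enorm.
  rewrite <- (sqrt_pow2 K HK), <- sqrt_mult_alt by apply pos_INR.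
  apply sqrt_le_1_alt. rewrite <- rsum_const. apply rsum_le. intros k Hk.
  rewrite <- (pow2_abs (u k)). apply pow_incr. split; [apply Rabs_pos | auto].
Qed.

Lemma sqrt_sum_sqr_triangle p q r s :
  sqrt ((p + q) ^ 2 + (r + s) ^ 2) <= sqrt (p ^ 2 + r ^ 2) + sqrt (q ^ 2 + s ^ 2).
Proof.
  assert (A : 0 <= p ^ 2 + r ^ 2) by nra. assert (B : 0 <= q ^ 2 + s ^ 2) by nra.
  pose proof (sqrt_pos (p ^ 2 + r ^ 2)). pose proof (sqrt_pos (q ^ 2 + s ^ 2)).
  pose proof (pow2_sqrt _ A). pose proof (pow2_sqrt _ B).
  set (X := sqrt (p ^ 2 + r ^ 2)) in *. set (Y := sqrt (q ^ 2 + s ^ 2)) in *.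
  assert (Cauchy_Schwarz : p * q + r * s <= X * Y).
  { destruct (Rle_or_lt (p * q + r * s) 0); [nra|].
    rewrite <- (sqrt_pow2 (p * q + r * s)) by lra.
    unfold X, Y. rewrite <- sqrt_mult_alt by auto. apply sqrt_le_1_alt.
    pose proof (pow2_ge_0 (p * s - q * r)). nra. }
  rewrite <- (sqrt_pow2 (X + Y)) by lra. apply sqrt_le_1_alt. nra.
Qed.

Lemma enorm_triangle d a b : enorm d (fun l => a l + b l) <= enorm d a + enorm d b.
Proof.
  induction d as [|d IH]; [unfold enorm; simpl; rewrite sqrt_0; lra|].
  unfold enorm in *; cbn [rsum].
  set (Sa := rsum d (fun l => a l ^ 2)) in *. set (Sb := rsum d (fun l => b l ^ 2)) in *.
  set (Sab := rsum d (fun l => (a l + b l) ^ 2)) in *.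
  assert (0 <= Sa) by apply rsum_sqr_nonneg. assert (0 <= Sb) by apply rsum_sqr_nonneg.
  assert (0 <= Sab) by apply rsum_sqr_nonneg.
  pose proof (sqrt_sum_sqr_triangle (sqrt Sa) (sqrt Sb) (a d) (b d)) as Hd.
  rewrite !pow2_sqrt in Hd by auto. eapply Rle_trans; [|exact Hd]. apply sqrt_le_1_alt.
  assert (sqrt Sab ^ 2 <= (sqrt Sa + sqrt Sb) ^ 2) by (pose proof (sqrt_pos Sab); apply pow_incr; lra).
  rewrite pow2_sqrt in * by auto. lra.
Qed.

Lemma enorm_reverse_triangle d a b : Rabs (enorm d a - enorm d b) <= enorm d (fun l => a l - b l).
Proof.
  pose proof (enorm_triangle d (fun l => a l - b l) b) as Ha.
  pose proof (enorm_triangle d (fun l => b l - a l) a) as Hb.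
  cbv beta in Ha, Hb.
  rewrite (enorm_ext d (fun l => a l - b l + b l) a) in Ha by (intros; ring).
  rewrite (enorm_ext d (fun l => b l - a l + a l) b) in Hb by (intros; ring).
  rewrite (enorm_diff_sym d b a) in Hb. apply Rabs_le. lra.
Qed.

Lemma Rpower_lt_base_neg x1 x2 y : 0 < x1 -> x1 < x2 -> y < 0 -> Rpower x2 y < Rpower x1 y.
Proof.
  intros H1 H12 Hy. unfold Rpower. apply exp_increasing.
  pose proof (ln_increasing x1 x2 H1 H12). nra.
Qed.

Lemma Rpower_le_base_nonpos x1 x2 y : 0 < x1 -> x1 <= x2 -> y <= 0 -> Rpower x2 y <= Rpower x1 y.
Proof.
  intros H1 H12 Hy. destruct H12 as [H12| <-]; [|lra].
  destruct Hy as [Hy| ->]; [now apply Rlt_le, Rpower_lt_base_neg|].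
  unfold Rpower. rewrite !Rmult_0_l. lra.
Qed.

Section TruncatedWeight.
Variables (alpha : R) (n : nat) (p : R -> R).
Hypotheses (halpha : 0 < alpha < 1) (hn : (2 <= n)%nat) (hp : is_psi_n alpha n p).

Local Notation r_lo := (Rpower (INR n) (- / alpha)).
Local Notation r_hi := (Rpower (INR n - 1) (- / alpha)).

(* The [Let] facts below sit in the context of every later proof of the section, where [lra]
   uses them silently. *)
Let INR_n_ge2 : 2 <= INR n.
Proof. replace 2 with (INR 2) by (simpl; lra). now apply le_INR. Qed.

Let r_lo_pos : 0 < r_lo.
Proof. apply exp_pos. Qed.

Let r_lo_lt_r_hi : r_lo < r_hi.
Proof.
  assert (0 < / alpha) by (apply Rinv_0_lt_compat; lra).
  apply Rpower_lt_base_neg; lra.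
Qed.

Let p_r_lo : p r_lo = INR n.
Proof. destruct hp as [_ [H _]]. apply H. lra. Qed.

Let p_r_hi : p r_hi = INR n - 1.
Proof.
  destruct hp as [Hpow _]. rewrite Hpow by lra. rewrite Rpower_mult.
  replace (- / alpha * - alpha) with 1 by (field; lra). apply Rpower_1. lra.
Qed.

Lemma psi_n_range s : 0 <= s -> 0 <= p s <= INR n.
Proof.
  intros Hs.
  pose proof p_r_lo; pose proof p_r_hi.
  destruct hp as [Hpow [Hflat [Hmono _]]].
  destruct (Rle_or_lt s r_lo); [rewrite Hflat by lra; lra|].
  destruct (Rle_or_lt r_hi s) as [Hhi|Hhi].
  - rewrite Hpow by lra. split; [apply Rlt_le, exp_pos|].
    pose proof (Rpower_le_base_nonpos r_hi s (- alpha) ltac:(lra) Hhi ltac:(lra)).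
    pose proof p_r_hi as E. rewrite Hpow in E by lra. lra.
  - destruct Hmono as [D|D];
      pose proof (D r_lo s ltac:(lra) ltac:(lra) ltac:(lra));
      pose proof (D s r_hi ltac:(lra) ltac:(lra) ltac:(lra)); lra.
Qed.

Let p_ex_derive s : 0 < s -> ex_derive p s.
Proof. intros Hs. destruct hp as [_ [_ [_ H]]]. exact (H s Hs 1%nat). Qed.

Lemma psi_n_Derive_bounded : exists L, 0 <= L /\ forall s, 0 < s -> Rabs (Derive p s) <= L.
Proof.
  destruct hp as [Hpow [Hflat [_ Hsmooth]]].
  destruct (continuity_ab_maj (fun s => Rabs (Derive p s)) r_lo r_hi) as [sM [HM _]]; [lra| |].
  { intros c Hc. apply (continuity_pt_comp (Derive p) Rabs); [|apply Rcontinuity_abs].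
    apply continuity_pt_filterlim, (ex_derive_continuous (Derive p)).
    exact (Hsmooth c ltac:(lra) 2%nat). }
  exists (Rmax (Rabs (Derive p sM)) (alpha * Rpower r_hi (- alpha - 1))).
  split; [eapply Rle_trans; [apply Rabs_pos | apply Rmax_l]|].
  intros s Hs. destruct (Rle_or_lt r_lo s) as [Hlo|Hlo]; [destruct (Rle_or_lt s r_hi) as [Hhi|Hhi]|].
  - eapply Rle_trans; [|apply Rmax_l]. apply HM; lra.
  - eapply Rle_trans; [|apply Rmax_r].
    assert (E : Derive p s = - alpha * Rpower s (- alpha - 1)).
    { rewrite (Derive_ext_loc p (fun s => Rpower s (- alpha))).
      - apply is_derive_unique, is_derive_Reals, derivable_pt_lim_power. lra.
      - apply (locally_interval _ s r_hi p_infty); simpl; auto. intros y Hy _. apply Hpow; lra. }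
    rewrite E, Rabs_mult, Rabs_Ropp, Rabs_pos_eq, Rabs_pos_eq by (lra || apply Rlt_le, exp_pos).
    apply Rmult_le_compat_l; [lra|]. apply Rpower_le_base_nonpos; lra.
  - eapply Rle_trans; [|apply Rmax_l]. eapply Rle_trans; [|apply Rabs_pos].
    rewrite (Derive_ext_loc p (fun _ => INR n)), Derive_const, Rabs_R0; [lra|].
    apply (locally_interval _ s 0 r_lo); simpl; auto. intros y Hy Hy'. apply Hflat; lra.
Qed.

Lemma psi_n_lipschitz : exists L, 0 <= L /\
  forall r1 r2, 0 <= r1 -> 0 <= r2 -> Rabs (p r1 - p r2) <= L * Rabs (r1 - r2).
Proof.
  destruct psi_n_Derive_bounded as [L [HL HD]]. exists L. split; auto.
  assert (MVT_bound : forall r1 r2, r_lo <= r1 -> r_lo <= r2 ->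
            Rabs (p r1 - p r2) <= L * Rabs (r1 - r2)).
  { intros r1 r2 H1 H2. assert (0 < Rmin r2 r1) by (apply Rmin_glb_lt; lra).
    destruct (MVT_gen p r2 r1 (Derive p)) as [c [Hc ->]].
    - intros y Hy. apply Derive_correct, p_ex_derive. lra.
    - intros y Hy. apply continuity_pt_filterlim, (ex_derive_continuous p), p_ex_derive. lra.
    - rewrite Rabs_mult. apply Rmult_le_compat_r; [apply Rabs_pos|]. apply HD. lra. }
  (* [p] is constant on [0, r_lo], so clamping the arguments at [r_lo] changes nothing. *)
  assert (Hclamp : forall r, 0 <= r -> p r = p (Rmax r r_lo)).
  { intros r Hr. destruct (Rle_or_lt r r_lo).
    - rewrite Rmax_right, p_r_lo by lra. destruct hp as [_ [Hflat _]]. apply Hflat; lra.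
    - now rewrite Rmax_left by lra. }
  intros r1 r2 H1 H2. rewrite (Hclamp r1), (Hclamp r2) by auto.
  eapply Rle_trans; [apply MVT_bound; apply Rmax_r|].
  apply Rmult_le_compat_l; auto.
  unfold Rmax; destruct (Rle_dec r1 r_lo), (Rle_dec r2 r_lo); apply Rabs_le; split;
    pose proof (Rabs_pos (r1 - r2)); try lra;
    first [ pose proof (Rle_abs (r1 - r2)); lra
          | pose proof (Rle_abs (- (r1 - r2))); rewrite Rabs_Ropp in *; lra ].
Qed.

End TruncatedWeight.

Definition cont_within (D : R -> Prop) (f : R -> R) (t : R) : Prop :=
  filterlim f (within D (locally t)) (locally (f t)).

Section ContWithin.
Variable D : R -> Prop.

Lemma cont_within_eps f t : cont_within D f t -> forall eps, 0 < eps ->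
  exists delta, 0 < delta /\ forall s, D s -> Rabs (s - t) < delta -> Rabs (f s - f t) < eps.
Proof.
  intros H eps He.
  destruct (proj1 (filterlim_locally (F := within D (locally t)) f (f t)) H (mkposreal eps He))
    as [delta Hd].
  exists delta. split; [apply cond_pos|]. intros s Hs Hst. now apply (Hd s).
Qed.

Lemma cont_within_ge f t c : cont_within D f t ->
  (forall eps, 0 < eps -> exists s, D s /\ Rabs (s - t) < eps /\ c <= f s) -> c <= f t.
Proof.
  intros Hf Hc. destruct (Rle_or_lt c (f t)) as [|Hlt]; auto.
  destruct (cont_within_eps f t Hf (c - f t) ltac:(lra)) as [delta [Hdelta Hd]].
  destruct (Hc delta Hdelta) as [s [Hs [Hst Hcs]]].
  pose proof (Hd s Hs Hst). pose proof (Rle_abs (f s - f t)). lra.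
Qed.

Lemma cont_within_subset (D' : R -> Prop) f t :
  (forall s, D' s -> D s) -> cont_within D f t -> cont_within D' f t.
Proof.
  intros HD H. eapply filterlim_filter_le_1; [|exact H].
  intros P HP. unfold within in *. apply (filter_imp (fun x => D x -> P x)); auto.
Qed.

Lemma cont_within_of_ex_derive f t : ex_derive f t -> cont_within D f t.
Proof.
  intros H. eapply filterlim_filter_le_1; [|apply (ex_derive_continuous f t H)].
  intros P HP. unfold within. now apply (filter_imp P).
Qed.

Lemma cont_within_const c t : cont_within D (fun _ => c) t.
Proof. apply filterlim_const. Qed.

Lemma cont_within_plus f g t :
  cont_within D f t -> cont_within D g t -> cont_within D (fun s => f s + g s) t.
Proof. intros Hf Hg. eapply filterlim_comp_2; eauto. apply (filterlim_plus (f t) (g t)). Qed.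

Lemma cont_within_mult f g t :
  cont_within D f t -> cont_within D g t -> cont_within D (fun s => f s * g s) t.
Proof. intros Hf Hg. eapply filterlim_comp_2; eauto. apply (filterlim_mult (f t) (g t)). Qed.

Lemma cont_within_comp f (g : R -> R) t :
  cont_within D f t -> continuous g (f t) -> cont_within D (fun s => g (f s)) t.
Proof. intros Hf Hg. eapply filterlim_comp; eauto. Qed.

Lemma cont_within_opp f t : cont_within D f t -> cont_within D (fun s => - f s) t.
Proof.
  intros H. apply (cont_within_comp f Ropp t H).
  apply continuity_pt_filterlim, continuity_pt_opp, continuity_pt_id.
Qed.

Lemma cont_within_minus f g t :
  cont_within D f t -> cont_within D g t -> cont_within D (fun s => f s - g s) t.
Proof. intros. apply cont_within_plus, cont_within_opp; auto. Qed.

Lemma cont_within_sqr f t : cont_within D f t -> cont_within D (fun s => f s ^ 2) t.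
Proof.
  intros H. apply (cont_within_comp f (fun y => y ^ 2) t H).
  apply (ex_derive_continuous (fun y => y ^ 2)). auto_derive. auto.
Qed.

Lemma cont_within_rsum n (F : nat -> R -> R) t : (forall k, (k < n)%nat -> cont_within D (F k) t) ->
  cont_within D (fun s => rsum n (fun k => F k s)) t.
Proof.
  induction n as [|n IH]; intros H; simpl; [apply cont_within_const|].
  apply cont_within_plus; [apply IH; intros|]; apply H; lia.
Qed.

Lemma cont_within_eventually_pos f t :
  cont_within D f t -> 0 < f t -> within D (locally t) (fun s => 0 < f s).
Proof.
  intros H Hpos.
  eapply filter_imp; [|exact (proj1 (filterlim_locally f (f t)) H (mkposreal (f t / 2) ltac:(lra)))].
  intros s Hs. unfold ball in Hs; simpl in Hs.
  unfold AbsRing_ball, abs, minus, plus, opp in Hs; simpl in Hs.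
  apply Rabs_lt_between in Hs. lra.
Qed.

End ContWithin.

Lemma filter_forall_lt {T : Type} {F : (T -> Prop) -> Prop} {FF : Filter F} n (P : nat -> T -> Prop) :
  (forall i, (i < n)%nat -> F (P i)) -> F (fun s => forall i, (i < n)%nat -> P i s).
Proof.
  induction n as [|n IH]; intros H.
  - apply (filter_imp (fun _ => True)); [intros; lia | apply filter_true].
  - apply (filter_imp (fun s => (forall i, (i < n)%nat -> P i s) /\ P n s)).
    + intros s [H1 H2] i Hi. destruct (Nat.eq_dec i n) as [->|]; auto. apply H1; lia.
    + apply filter_and; [apply IH; intros|]; apply H; lia.
Qed.

Lemma le_of_derive_nonpos_open a b f df :
  (forall s, a < s < b -> is_derive f s (df s) /\ df s <= 0) ->
  forall p q, a < p -> p <= q -> q < b -> f q <= f p.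
Proof.
  intros H p q Hp Hpq Hq. destruct Hpq as [Hpq| <-]; [|lra].
  destruct (MVT_gen f p q df) as [c [Hc E]];
    rewrite ?Rmin_left, ?Rmax_right in * by lra.
  - intros y Hy. apply H; lra.
  - intros y Hy. apply continuity_pt_filterlim, (ex_derive_continuous f).
    exists (df y). apply H; lra.
  - destruct (H c ltac:(lra)) as [_ Hd].
    assert (df c * (q - p) <= 0) by (apply Rmult_le_0_r; lra). lra.
Qed.

Lemma le_left_of_derive_nonpos a b f df : a <= b ->
  (forall s, a < s < b -> is_derive f s (df s) /\ df s <= 0) ->
  cont_within (fun s => a <= s <= b) f a -> cont_within (fun s => a <= s <= b) f b ->
  forall s, a <= s <= b -> f s <= f a.
Proof.
  intros Hab H Ca Cb.
  (* The endpoint values are limits of interior values, which the mean value theorem controls. *)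
  assert (Hnear : forall eps r, 0 < eps -> 0 < r ->
            0 < Rmin (eps / 2) (r / 2) /\ Rmin (eps / 2) (r / 2) < eps /\ Rmin (eps / 2) (r / 2) < r).
  { intros eps r He Hr. pose proof (Rmin_l (eps / 2) (r / 2)). pose proof (Rmin_r (eps / 2) (r / 2)).
    assert (0 < Rmin (eps / 2) (r / 2)) by (apply Rmin_glb_lt; lra). lra. }
  assert (Interior : forall s, a < s < b -> f s <= f a).
  { intros s Hs. apply (cont_within_ge _ f a (f s) Ca). intros eps He.
    destruct (Hnear eps (s - a) He ltac:(lra)) as [H1 [H2 H3]].
    exists (a + Rmin (eps / 2) ((s - a) / 2)). split; [lra|]. split.
    - rewrite Rabs_pos_eq; lra.
    - apply (le_of_derive_nonpos_open a b f df H); lra. }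
  intros s Hs. destruct (Req_dec s a) as [->|Ha]; [lra|].
  destruct (Req_dec s b) as [->|Hb]; [|apply Interior; lra].
  cut (- f a <= - f b); [lra|].
  apply (cont_within_ge _ (fun s => - f s) b (- f a) (cont_within_opp _ f b Cb)). intros eps He.
  destruct (Hnear eps (b - a) He ltac:(lra)) as [H1 [H2 H3]].
  exists (b - Rmin (eps / 2) ((b - a) / 2)). split; [lra|]. split.
  - rewrite Rabs_left; lra.
  - enough (f (b - Rmin (eps / 2) ((b - a) / 2)) <= f a) by lra. apply Interior; lra.
Qed.

Lemma eq_left_of_derive_0 a b f : a <= b ->
  (forall s, a < s < b -> is_derive f s 0) ->
  cont_within (fun s => a <= s <= b) f a -> cont_within (fun s => a <= s <= b) f b ->
  forall s, a <= s <= b -> f s = f a.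
Proof.
  intros Hab H Ca Cb s Hs. apply Rle_antisym.
  - apply (le_left_of_derive_nonpos a b f (fun _ => 0)); auto.
    intros u Hu. split; [apply H|]; lra.
  - enough (- f s <= - f a) by lra.
    apply (le_left_of_derive_nonpos a b (fun s => - f s) (fun _ => - 0)); auto;
      try (apply cont_within_opp; assumption).
    intros u Hu. split; [apply (is_derive_opp f), H|]; lra.
Qed.

(* Gronwall's lemma, in the form [(f e^(-C s))' <= 0]. *)
Lemma gronwall_nonpos a b f df C : a <= b ->
  (forall s, a < s < b -> is_derive f s (df s) /\ df s <= C * f s) ->
  cont_within (fun s => a <= s <= b) f a -> cont_within (fun s => a <= s <= b) f b ->
  f a <= 0 -> forall s, a <= s <= b -> f s <= 0.
Proof.
  intros Hab H Ca Cb Ha s Hs.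
  set (g := fun s => f s * exp (- C * s)).
  assert (Cexp : forall t, cont_within (fun s => a <= s <= b) (fun s => exp (- C * s)) t).
  { intros t. apply cont_within_of_ex_derive. auto_derive. auto. }
  assert (Hg : g s <= g a).
  { apply (le_left_of_derive_nonpos a b g (fun s => df s * exp (- C * s) + f s * (- C * exp (- C * s))));
      try (apply cont_within_mult; auto); auto.
    intros u Hu. destruct (H u Hu) as [D1 D2]. split.
    - apply (is_derive_mult f (fun s => exp (- C * s))); auto.
      + auto_derive; auto; ring.
      + intros; apply Rmult_comm.
    - pose proof (exp_pos (- C * u)). nra. }
  unfold g in Hg. pose proof (exp_pos (- C * s)). pose proof (exp_pos (- C * a)).
  assert (f a * exp (- C * a) <= 0) by nra. nra.
Qed.

Lemma is_derive_rsum n (F : nat -> R -> R) dF s :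
  (forall k, (k < n)%nat -> is_derive (F k) s (dF k)) ->
  is_derive (fun t => rsum n (fun k => F k t)) s (rsum n dF).
Proof.
  induction n as [|n IH]; intros H; simpl; [apply (is_derive_const 0)|].
  apply (is_derive_plus (fun t => rsum n (fun k => F k t)) (F n)); [apply IH; intros|]; apply H; lia.
Qed.

Lemma is_derive_sqr f s df : is_derive f s df -> is_derive (fun t => f t ^ 2) s (2 * f s * df).
Proof.
  intros H. replace (2 * f s * df) with (INR 2 * df * f s ^ pred 2) by (simpl; ring).
  now apply is_derive_pow.
Qed.

Definition pos_part_sqr (y : R) : R := Rmax y 0 ^ 2.

Lemma is_derive_pos_part_sqr y : is_derive pos_part_sqr y (2 * Rmax y 0).
Proof.
  destruct (Rtotal_order y 0) as [Hy|[->|Hy]].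
  - rewrite Rmax_right by lra. replace (2 * 0) with 0 by ring.
    apply (is_derive_ext_loc (fun _ => 0)); [|apply (is_derive_const 0)].
    apply (locally_interval _ y m_infty 0); simpl; auto.
    intros z _ Hz. unfold pos_part_sqr. rewrite Rmax_right by lra. ring.
  - rewrite Rmax_right by lra. apply is_derive_Reals. intros eps He.
    exists (mkposreal eps He). intros h Hh Hd. simpl in Hd. unfold pos_part_sqr.
    rewrite Rplus_0_l, (Rmax_right 0 0) by lra. unfold Rmax. destruct (Rle_dec h 0).
    + replace ((0 ^ 2 - 0 ^ 2) / h - 2 * 0) with 0 by (field; auto). rewrite Rabs_R0; auto.
    + replace ((h ^ 2 - 0 ^ 2) / h - 2 * 0) with h by (field; auto). auto.
  - rewrite Rmax_left by lra.
    apply (is_derive_ext_loc (fun z => z ^ 2)).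
    + apply (locally_interval _ y 0 p_infty); simpl; auto.
      intros z Hz _. unfold pos_part_sqr. rewrite Rmax_left by lra. ring.
    + auto_derive; auto. ring.
Qed.

Lemma pos_part_sqr_ge0 y : 0 <= pos_part_sqr y.
Proof. apply pow2_ge_0. Qed.

Lemma pos_part_sqr_le0 y : pos_part_sqr y <= 0 -> y <= 0.
Proof.
  unfold pos_part_sqr. intros H. pose proof (pow2_ge_0 (Rmax y 0)).
  assert (Rmax y 0 = 0) by nra. pose proof (Rmax_l y 0). lra.
Qed.

Lemma pos_part_sqr_cont y : continuous pos_part_sqr y.
Proof. apply (ex_derive_continuous pos_part_sqr). eexists. apply is_derive_pos_part_sqr. Qed.

Lemma pos_part_sqr_pull yi yk c K : 0 <= c <= K ->
  2 * Rmax yi 0 * ((yk - yi) * c) <= K * pos_part_sqr yk.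
Proof.
  intros [H0 H1]. unfold pos_part_sqr, Rmax.
  destruct (Rle_dec yi 0), (Rle_dec yk 0); simpl.
  - nra.
  - assert (0 <= K * (yk * yk)) by (apply Rmult_le_pos; nra). nra.
  - assert (0 <= yi * ((yi - yk) * c)) by (apply Rmult_le_pos; [|apply Rmult_le_pos]; lra). nra.
  - destruct (Rle_or_lt yk yi).
    + assert (0 <= yi * ((yi - yk) * c)) by (apply Rmult_le_pos; [|apply Rmult_le_pos]; lra).
      assert (0 <= K * (yk * yk)) by (apply Rmult_le_pos; nra). nra.
    + assert (2 * yi * (yk - yi) * c <= 2 * yi * (yk - yi) * K) by (apply Rmult_le_compat_l; nra).
      assert (0 <= K * ((yk - yi) ^ 2 + yi ^ 2)) by (apply Rmult_le_pos; nra). nra.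
Qed.

Lemma excess_rate_le N (w : nat -> R) (c : nat -> nat -> R) K m :
  (1 <= N)%nat -> (forall i k, (i < N)%nat -> (k < N)%nat -> 0 <= c i k <= K) ->
  rsum N (fun i => 2 * Rmax (w i - m) 0 * (/ INR N * rsum N (fun k => (w k - w i) * c i k)))
    <= K * rsum N (fun i => pos_part_sqr (w i - m)).
Proof.
  intros HN Hc. assert (HNpos : 0 < / INR N) by (apply Rinv_0_lt_compat, lt_0_INR; lia).
  apply Rle_trans with (rsum N (fun i => / INR N * rsum N (fun k => K * pos_part_sqr (w k - m)))).
  - apply rsum_le. intros i Hi. rewrite <- !rsum_scal. apply rsum_le. intros k Hk.
    enough (2 * Rmax (w i - m) 0 * ((w k - w i) * c i k) <= K * pos_part_sqr (w k - m)) by nra.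
    replace (w k - w i) with ((w k - m) - (w i - m)) by ring.
    apply pos_part_sqr_pull, Hc; auto.
  - rewrite rsum_const, rsum_scal. right. field. apply not_0_INR. lia.
Qed.

(* Maximum principle: [E = sum_i ((w_i - m)_+)^2] satisfies [E' <= K E] and [E(a) = 0]. *)
Lemma consensus_max_principle N (w : nat -> R -> R) (c : nat -> nat -> R -> R) a b K m :
  (1 <= N)%nat -> a <= b ->
  (forall i, (i < N)%nat -> forall s, a < s < b ->
     is_derive (w i) s (/ INR N * rsum N (fun k => (w k s - w i s) * c i k s))) ->
  (forall i k s, (i < N)%nat -> (k < N)%nat -> a < s < b -> 0 <= c i k s <= K) ->
  (forall i, (i < N)%nat ->
     cont_within (fun s => a <= s <= b) (w i) a /\ cont_within (fun s => a <= s <= b) (w i) b) ->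
  (forall i, (i < N)%nat -> w i a <= m) ->
  forall i s, (i < N)%nat -> a <= s <= b -> w i s <= m.
Proof.
  intros HN Hab Hd Hc Hcont Ha.
  set (E := fun s => rsum N (fun i => pos_part_sqr (w i s - m))).
  assert (HdE : forall s, a < s < b -> is_derive E s
            (rsum N (fun i => 2 * Rmax (w i s - m) 0
                              * (/ INR N * rsum N (fun k => (w k s - w i s) * c i k s))))).
  { intros s Hs. apply (is_derive_rsum N (fun i s => pos_part_sqr (w i s - m))). intros i Hi.
    rewrite Rmult_comm.
    apply (is_derive_comp pos_part_sqr (fun s => w i s - m)); [apply is_derive_pos_part_sqr|].
    rewrite <- Rminus_0_r.
    apply (is_derive_minus (w i) (fun _ => m)); [apply Hd; auto | apply (is_derive_const m)]. }
  assert (HE_cont : forall t, t = a \/ t = b -> cont_within (fun s => a <= s <= b) E t).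
  { intros t Ht. apply cont_within_rsum. intros k Hk.
    apply cont_within_comp; [|apply pos_part_sqr_cont].
    apply cont_within_minus; [|apply cont_within_const].
    destruct Ht as [->| ->]; apply Hcont; auto. }
  assert (HEa : E a <= 0).
  { unfold E. rewrite <- (Rmult_0_r (INR N)), <- rsum_const. apply rsum_le.
    intros k Hk. unfold pos_part_sqr. rewrite Rmax_right by (pose proof (Ha k Hk); lra). simpl; lra. }
  intros i s Hi Hs.
  assert (HE : E s <= 0).
  { apply (gronwall_nonpos a b E (fun s => rsum N (fun i => 2 * Rmax (w i s - m) 0
              * (/ INR N * rsum N (fun k => (w k s - w i s) * c i k s)))) K Hab); auto.
    intros u Hu. split; [now apply HdE|]. apply excess_rate_le; auto. }
  pose proof (rsum_term_le N (fun i => pos_part_sqr (w i s - m)) i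
                (fun k _ => pos_part_sqr_ge0 _) Hi).
  enough (w i s - m <= 0) by lra. apply pos_part_sqr_le0. unfold E in HE. lra.
Qed.

Fixpoint Ck_on (k : nat) (U : R -> Prop) (f : R -> R) : Prop :=
  match k with
  | O => True
  | S k' => (forall s, U s -> ex_derive f s) /\ Ck_on k' U (Derive f)
  end.

Definition smooth_on (U : R -> Prop) (f : R -> R) : Prop := forall k, Ck_on k U f.

Section CkOn.
Variable U : R -> Prop.
Hypothesis hU : open U.

Lemma Ck_on_ext k : forall f g, (forall s, U s -> f s = g s) -> Ck_on k U f -> Ck_on k U g.
Proof.
  induction k as [|k IH]; simpl; auto. intros f g E [H1 H2]. split.
  - intros s Hs. apply (ex_derive_ext_loc f g); [apply (filter_imp U)|apply H1]; auto.
  - apply (IH (Derive f)); auto. intros s Hs. apply Derive_ext_loc. apply (filter_imp U); auto.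
Qed.

Lemma Ck_on_pred k f : Ck_on (S k) U f -> Ck_on k U f.
Proof.
  revert f. induction k as [|k IH]; simpl; auto.
  intros f [H1 [H2 H3]]. split; auto. apply IH. simpl; auto.
Qed.

Lemma Ck_on_const k c : Ck_on k U (fun _ => c).
Proof.
  revert c. induction k as [|k IH]; simpl; auto. intros c. split; [intros; apply ex_derive_const|].
  apply (Ck_on_ext k (fun _ => 0)); auto. intros; now rewrite Derive_const.
Qed.

Lemma Ck_on_plus k f g : Ck_on k U f -> Ck_on k U g -> Ck_on k U (fun s => f s + g s).
Proof.
  revert f g. induction k as [|k IH]; simpl; auto. intros f g [F1 F2] [G1 G2]. split.
  - intros s Hs. apply (ex_derive_plus f g); auto.
  - apply (Ck_on_ext k (fun s => Derive f s + Derive g s)); auto.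
    intros s Hs. rewrite Derive_plus; auto.
Qed.

Lemma Ck_on_mult k f g : Ck_on k U f -> Ck_on k U g -> Ck_on k U (fun s => f s * g s).
Proof.
  revert f g. induction k as [|k IH]; simpl; auto. intros f g Hf Hg.
  pose proof (Ck_on_pred k f Hf). pose proof (Ck_on_pred k g Hg).
  destruct Hf as [F1 F2], Hg as [G1 G2]. split.
  - intros s Hs. apply (ex_derive_mult f g); auto.
  - apply (Ck_on_ext k (fun s => Derive f s * g s + f s * Derive g s)).
    + intros s Hs. rewrite Derive_mult; auto.
    + apply Ck_on_plus; apply IH; auto.
Qed.

Lemma Ck_on_scal k c f : Ck_on k U f -> Ck_on k U (fun s => c * f s).
Proof. intros. apply Ck_on_mult; auto. apply Ck_on_const. Qed.

Lemma Ck_on_minus k f g : Ck_on k U f -> Ck_on k U g -> Ck_on k U (fun s => f s - g s).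
Proof.
  intros. apply (Ck_on_ext k (fun s => f s + (-1) * g s)); [intros; ring|].
  apply Ck_on_plus, Ck_on_scal; auto.
Qed.

Lemma Ck_on_rsum k n (F : nat -> R -> R) :
  (forall j, (j < n)%nat -> Ck_on k U (F j)) -> Ck_on k U (fun s => rsum n (fun j => F j s)).
Proof.
  induction n as [|n IH]; intros H; simpl; [apply Ck_on_const|].
  apply Ck_on_plus; [apply IH; intros|]; apply H; lia.
Qed.

Lemma Ck_on_Derive_n m : forall k f, Ck_on (k + m) U f -> Ck_on k U (Derive_n f m).
Proof.
  induction m as [|m IH]; intros k f H.
  - rewrite Nat.add_0_r in H. apply (Ck_on_ext k f); auto.
  - rewrite <- plus_n_Sm in H. apply (IH (S k)) in H. now destruct H.
Qed.

Lemma ex_derive_n_of_smooth_on f : smooth_on U f -> forall k s, U s -> ex_derive_n f k s.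
Proof.
  intros H k s Hs. destruct k as [|k]; simpl; auto.
  destruct (Ck_on_Derive_n k 1%nat f (H _)) as [Hd _]. now apply Hd.
Qed.

Lemma smooth_on_of_ex_derive_n f : (forall s, U s -> forall k, ex_derive_n f k s) -> smooth_on U f.
Proof.
  intros H.
  assert (Hn : forall j m, Ck_on j U (Derive_n f m)).
  { induction j as [|j IH]; simpl; auto. intros m. split; [intros s Hs; apply (H s Hs (S m))|].
    exact (IH (S m)). }
  intros k. apply (Hn k 0%nat).
Qed.

End CkOn.

Lemma Ck_on_comp U V (hU : open U) (hV : open V) k : forall h f,
  smooth_on V h -> Ck_on k U f -> (forall s, U s -> V (f s)) -> Ck_on k U (fun s => h (f s)).
Proof.
  induction k as [|k IH]; simpl; auto. intros h f Hh Hf HUV.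
  assert (Hh' : forall y, V y -> ex_derive h y) 
    by (intros y Hy; destruct (Hh 1%nat) as [Hd _]; now apply Hd).
  pose proof (Ck_on_pred U k f Hf). destruct Hf as [F1 F2]. split.
  - intros s Hs. apply (ex_derive_comp h f); auto.
  - apply (Ck_on_ext U hU k (fun s => Derive f s * Derive h (f s))).
    + intros s Hs. rewrite (Derive_comp h f s); auto.
    + apply Ck_on_mult; auto. apply IH; auto. intros j. now destruct (Hh (S j)).
Qed.

Lemma smooth_on_Rpower r : smooth_on (fun s => 0 < s) (fun s => Rpower s r).
Proof.
  assert (H : forall j c r, Ck_on j (fun s => 0 < s) (fun s => c * Rpower s r)).
  { induction j as [|j IH]; simpl; auto. intros c r'.
    assert (D : forall s, 0 < s -> is_derive (fun s => Rpower s r') s (r' * Rpower s (r' - 1)))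
      by (intros; now apply is_derive_Reals, derivable_pt_lim_power).
    split.
    - intros s Hs. apply ex_derive_scal. eexists. now apply D.
    - apply (Ck_on_ext _ (open_gt 0) j (fun s => (c * r') * Rpower s (r' - 1))); auto.
      intros s Hs. rewrite Derive_scal.
      replace (Derive (fun s => Rpower s r') s) with (r' * Rpower s (r' - 1)); [ring|].
      symmetry. apply is_derive_unique, D, Hs. }
  intros k. apply (Ck_on_ext _ (open_gt 0) k (fun s => 1 * Rpower s r)); auto.
  intros; ring.
Qed.

Lemma smooth_on_sqrt : smooth_on (fun s => 0 < s) sqrt.
Proof.
  intros k. apply (Ck_on_ext _ (open_gt 0) k (fun s => Rpower s (/ 2))).
  - intros s Hs. now rewrite Rpower_sqrt.
  - apply smooth_on_Rpower.
Qed.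

Section Solution.
Variables (N d : nat) (T : R) (p : R -> R) (x v : nat -> nat -> R -> R).
Hypotheses (hN : (1 <= N)%nat) (hsol : is_solution N d T p x v).
Variable K : R.
Hypothesis p_range : forall s, 0 <= s -> 0 <= p s <= K.

Definition weight i k s := p (enorm d (fun m => x i m s - x k m s)).

Lemma weight_sym i k s : weight i k s = weight k i s.
Proof. unfold weight. now rewrite enorm_diff_sym. Qed.

Lemma weight_range i k s : 0 <= weight i k s <= K.
Proof. apply p_range, enorm_ge0. Qed.

Lemma K_ge0 : 0 <= K.
Proof. pose proof (p_range 0 (Rle_refl 0)). lra. Qed.

Lemma is_derive_x i l s : (i < N)%nat -> (l < d)%nat -> 0 < s < T -> is_derive (x i l) s (v i l s).
Proof. intros. now apply hsol. Qed.

Lemma is_derive_v i l s : (i < N)%nat -> (l < d)%nat -> 0 < s < T ->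
  is_derive (v i l) s (accel N d p x v i l s).
Proof. intros. now apply hsol. Qed.

Lemma cont_within_x a i l t : (i < N)%nat -> (l < d)%nat -> 0 <= a -> a <= t <= T ->
  cont_within (fun s => a <= s <= T) (x i l) t.
Proof.
  intros. apply (cont_within_subset (fun s => 0 <= s <= T)); [intros; lra|]. apply hsol; auto; lra.
Qed.

Lemma cont_within_v a i l t : (i < N)%nat -> (l < d)%nat -> 0 <= a -> a <= t <= T ->
  cont_within (fun s => a <= s <= T) (v i l) t.
Proof.
  intros. apply (cont_within_subset (fun s => 0 <= s <= T)); [intros; lra|]. apply hsol; auto; lra.
Qed.

Lemma velocity_le l a m : (l < d)%nat -> 0 <= a <= T -> (forall i, (i < N)%nat -> v i l a <= m) ->
  forall i s, (i < N)%nat -> a <= s <= T -> v i l s <= m.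
Proof.
  intros Hl Ha Hm.
  apply (consensus_max_principle N (fun i => v i l) weight a T K m hN ltac:(lra)); auto.
  - intros i Hi s Hs. apply is_derive_v; auto; lra.
  - intros; apply weight_range.
  - intros i Hi. split; apply cont_within_v; auto; lra.
Qed.

Lemma velocity_ge l a m : (l < d)%nat -> 0 <= a <= T -> (forall i, (i < N)%nat -> m <= v i l a) ->
  forall i s, (i < N)%nat -> a <= s <= T -> m <= v i l s.
Proof.
  intros Hl Ha Hm i s Hi Hs. enough (- v i l s <= - m) by lra. revert i s Hi Hs.
  apply (consensus_max_principle N (fun i s => - v i l s) weight a T K (- m) hN ltac:(lra)).
  - intros i Hi s Hs.
    replace (/ INR N * rsum N (fun k => (- v k l s - - v i l s) * weight i k s))
      with (- (/ INR N * rsum N (fun k => (v k l s - v i l s) * weight i k s))).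
    + apply (is_derive_opp (v i l)), is_derive_v; auto; lra.
    + rewrite (rsum_ext N (fun k => (- v k l s - - v i l s) * weight i k s)
                 (fun k => -1 * ((v k l s - v i l s) * weight i k s))) by (intros; ring).
      rewrite rsum_scal. ring.
  - intros; apply weight_range.
  - intros i Hi. split; apply cont_within_opp, cont_within_v; auto; lra.
  - intros i Hi. pose proof (Hm i Hi). lra.
Qed.

Lemma velocity_abs_le B : (forall i l, (i < N)%nat -> (l < d)%nat -> Rabs (v i l 0) <= B) ->
  forall i l s, (i < N)%nat -> (l < d)%nat -> 0 <= s <= T -> Rabs (v i l s) <= B.
Proof.
  intros HB i l s Hi Hl Hs. apply Rabs_le.
  split; [apply (velocity_ge l 0 (- B)) | apply (velocity_le l 0 B)]; auto; try lra;
    intros k Hk; pose proof (proj1 (Rabs_le_between _ _) (HB k l Hk Hl)); lra.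
Qed.

Lemma velocity_bounded : exists B, 0 <= B /\
  forall i l s, (i < N)%nat -> (l < d)%nat -> 0 <= s <= T -> Rabs (v i l s) <= B.
Proof.
  destruct (finite_abs_bound N d (fun i l => v i l 0)) as [B [HB0 HB]].
  exists B. split; auto. now apply velocity_abs_le.
Qed.

Lemma mean_velocity_const l t : (l < d)%nat -> 0 <= t <= T ->
  / INR N * rsum N (fun i => v i l t) = / INR N * rsum N (fun i => v i l 0).
Proof.
  intros Hl Ht. f_equal.
  apply (eq_left_of_derive_0 0 T (fun s => rsum N (fun i => v i l s))); auto; try lra.
  - intros s Hs. replace 0 with (rsum N (fun i => / INR N * rsum N (fun k => (v k l s - v i l s) * weight i k s))).
    + apply (is_derive_rsum N (fun i => v i l)). intros i Hi. apply is_derive_v; auto.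
    + rewrite rsum_scal, (rsum_rsum_diff_sym N (fun k => v k l s)); [ring|].
      intros; apply weight_sym.
  - apply cont_within_rsum. intros k Hk. apply cont_within_v; auto; lra.
  - apply cont_within_rsum. intros k Hk. apply cont_within_v; auto; lra.
Qed.

Lemma Rabs_accel_le B i l s : (i < N)%nat ->
  (forall k, (k < N)%nat -> Rabs (v k l s) <= B) -> Rabs (accel N d p x v i l s) <= 2 * B * K.
Proof.
  intros Hi HB.
  change (Rabs (/ INR N * rsum N (fun k => (v k l s - v i l s) * weight i k s)) <= 2 * B * K). assert (HNpos : 0 < INR N) by (apply lt_0_INR; lia).
  rewrite Rabs_mult, Rabs_pos_eq by (apply Rlt_le, Rinv_0_lt_compat; auto).
  apply Rle_trans with (/ INR N * (INR N * (2 * B * K))); [|right; field; lra].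
  apply Rmult_le_compat_l; [apply Rlt_le, Rinv_0_lt_compat; auto|].
  apply Rabs_rsum_le. intros k Hk. pose proof (weight_range i k s).
  rewrite Rabs_mult, (Rabs_pos_eq (weight i k s)) by lra.
  apply Rmult_le_compat; try (apply Rabs_pos || lra).
  pose proof (HB k Hk). pose proof (HB i Hi). pose proof (Rabs_triang (v k l s) (- v i l s)).
  rewrite Rabs_Ropp in *. unfold Rminus. lra.
Qed.

Lemma velocity_accel_bounds : exists M,
  (forall i t, (i < N)%nat -> 0 <= t <= T -> enorm d (fun l => v i l t) <= M) /\
  (forall i t, (i < N)%nat -> 0 < t < T -> enorm d (fun l => Derive (v i l) t) <= 2 * M * K).
Proof.
  destruct velocity_bounded as [B [HB0 HB]]. pose proof K_ge0.
  exists (sqrt (INR d) * B). split.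
  - intros i t Hi Ht. apply enorm_le_coord_bound; auto.
  - intros i t Hi Ht. replace (2 * (sqrt (INR d) * B) * K) with (sqrt (INR d) * (2 * B * K)) by ring.
    apply enorm_le_coord_bound; [nra|]. intros l Hl.
    rewrite (is_derive_unique _ _ _ (is_derive_v i l t Hi Hl Ht)).
    apply Rabs_accel_le; auto. intros k Hk. apply HB; auto; lra.
Qed.

Lemma flocking_persists t : 0 <= t <= T ->
  (forall i j l, (i < N)%nat -> (j < N)%nat -> (l < d)%nat -> v i l t = v j l t) ->
  forall i l s, (i < N)%nat -> (l < d)%nat -> t <= s <= T -> v i l s = v i l t.
Proof.
  intros Ht H i l s Hi Hl Hs.
  assert (Hk : forall k, (k < N)%nat -> v k l t = v 0%nat l t) by (intros; apply H; auto; lia).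
  rewrite (Hk i Hi). apply Rle_antisym.
  - apply (velocity_le l t); auto. intros k Hk'. rewrite (Hk k Hk'); lra.
  - apply (velocity_ge l t); auto. intros k Hk'. rewrite (Hk k Hk'); lra.
Qed.


Lemma accel_diff_le B L i j l s : (i < N)%nat -> (j < N)%nat -> 0 <= L ->
  (forall r1 r2, 0 <= r1 -> 0 <= r2 -> Rabs (p r1 - p r2) <= L * Rabs (r1 - r2)) ->
  (forall k, (k < N)%nat -> Rabs (v k l s) <= B) ->
  Rabs (accel N d p x v i l s - accel N d p x v j l s)
    <= K * Rabs (v i l s - v j l s) + 2 * B * L * enorm d (fun m => x i m s - x j m s).
Proof.
  intros Hi Hj HL Lip HB. assert (HNpos : 0 < INR N) by (apply lt_0_INR; lia).
  set (Dv := v i l s - v j l s). set (Ex := enorm d (fun m => x i m s - x j m s)).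
  change (Rabs (/ INR N * rsum N (fun k => (v k l s - v i l s) * weight i k s)
                - / INR N * rsum N (fun k => (v k l s - v j l s) * weight j k s))
          <= K * Rabs Dv + 2 * B * L * Ex).
  rewrite <- Rmult_minus_distr_l, <- rsum_minus, Rabs_mult,
    Rabs_pos_eq by (apply Rlt_le, Rinv_0_lt_compat; auto).
  apply Rle_trans with (/ INR N * (INR N * (K * Rabs Dv + 2 * B * L * Ex))); [|right; field; lra].
  apply Rmult_le_compat_l; [apply Rlt_le, Rinv_0_lt_compat; auto|].
  apply Rabs_rsum_le. intros k Hk.
  replace ((v k l s - v i l s) * weight i k s - (v k l s - v j l s) * weight j k s)
    with (- Dv * weight i k s + (v k l s - v j l s) * (weight i k s - weight j k s)) by (unfold Dv; ring).
  eapply Rle_trans; [apply Rabs_triang|]. rewrite !Rabs_mult, Rabs_Ropp.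
  pose proof (weight_range i k s). rewrite (Rabs_pos_eq (weight i k s)) by lra.
  apply Rplus_le_compat; [rewrite Rmult_comm; apply Rmult_le_compat_r; [apply Rabs_pos | lra]|].
  assert (Rabs (v k l s - v j l s) <= 2 * B).
  { pose proof (HB k Hk). pose proof (HB j Hj). pose proof (Rabs_triang (v k l s) (- v j l s)).
    rewrite Rabs_Ropp in *. unfold Rminus. lra. }
  assert (Rabs (weight i k s - weight j k s) <= L * Ex).
  { unfold weight. eapply Rle_trans; [apply Lip; apply enorm_ge0|].
    apply Rmult_le_compat_l; auto. eapply Rle_trans; [apply enorm_reverse_triangle|].
    right. apply enorm_ext. intros; ring. }
  replace (2 * B * L * Ex) with ((2 * B) * (L * Ex)) by ring.
  apply Rmult_le_compat; auto; apply Rabs_pos.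
Qed.

Lemma energy_rate_le X V a A B E : 0 <= A -> 0 <= B -> 0 <= E -> Rabs a <= A * Rabs V + B * E ->
  2 * X * V + 2 * V * a <= (1 + 2 * A + B) * (X ^ 2 + V ^ 2) + B * E ^ 2.
Proof.
  intros HA HB HE H.
  assert (V * a <= Rabs V * Rabs a) by (rewrite <- Rabs_mult; apply Rle_abs).
  assert (Rabs V * Rabs a <= Rabs V * (A * Rabs V + B * E)) by (apply Rmult_le_compat_l; [apply Rabs_pos|auto]).
  assert (HV : Rabs V * Rabs V = V ^ 2) by (rewrite <- Rabs_mult, Rabs_pos_eq; nra).
  assert (2 * (Rabs V * E) <= V ^ 2 + E ^ 2) by (rewrite <- HV; pose proof (pow2_ge_0 (Rabs V - E)); nra).
  assert (B * (2 * (Rabs V * E)) <= B * (V ^ 2 + E ^ 2)) by (apply Rmult_le_compat_l; auto).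
  pose proof (pow2_ge_0 X). pose proof (pow2_ge_0 V). pose proof (pow2_ge_0 (X - V)).
  nra.
Qed.

Lemma pair_energy_rate_le B L i j s : (i < N)%nat -> (j < N)%nat -> 0 <= B -> 0 <= L ->
  (forall r1 r2, 0 <= r1 -> 0 <= r2 -> Rabs (p r1 - p r2) <= L * Rabs (r1 - r2)) ->
  (forall k l, (k < N)%nat -> (l < d)%nat -> Rabs (v k l s) <= B) ->
  rsum d (fun l => 2 * (x i l s - x j l s) * (v i l s - v j l s)
                   + 2 * (v i l s - v j l s) * (accel N d p x v i l s - accel N d p x v j l s))
    <= (1 + 2 * K + 2 * B * L + INR d * (2 * B * L))
       * rsum d (fun l => (x i l s - x j l s) ^ 2 + (v i l s - v j l s) ^ 2).
Proof.
  intros Hi Hj HB0 HL Lip HB. pose proof K_ge0.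
  set (Dx := fun l => x i l s - x j l s). set (Dv := fun l => v i l s - v j l s).
  set (Ex := enorm d Dx). set (En := rsum d (fun l => Dx l ^ 2 + Dv l ^ 2)).
  change (rsum d (fun l => (x i l s - x j l s) ^ 2 + (v i l s - v j l s) ^ 2)) with En.
  apply Rle_trans with
    (rsum d (fun l => (1 + 2 * K + 2 * B * L) * (Dx l ^ 2 + Dv l ^ 2) + 2 * B * L * Ex ^ 2)).
  - apply rsum_le. intros l Hl. apply energy_rate_le; try (apply enorm_ge0 || nra).
    apply (accel_diff_le B L); auto.
  - rewrite rsum_plus, rsum_const, rsum_scal. unfold Ex. rewrite enorm_sqr. fold En.
    assert (rsum d (fun m => Dx m ^ 2) <= En)
      by (apply rsum_le; intros; pose proof (pow2_ge_0 (Dv k)); lra).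
    assert (0 <= INR d * (2 * B * L)) by (apply Rmult_le_pos; [apply pos_INR | nra]).
    assert (INR d * (2 * B * L) * rsum d (fun m => Dx m ^ 2) <= INR d * (2 * B * L) * En)
      by (apply Rmult_le_compat_l; auto).
    lra.
Qed.

(* Gronwall for [sum_l |x_il - x_jl|^2 + |v_il - v_jl|^2], which vanishes at [t]. *)
Lemma collision_sticks t i j : 0 <= t <= T -> (i < N)%nat -> (j < N)%nat ->
  (exists L, 0 <= L /\ forall r1 r2, 0 <= r1 -> 0 <= r2 -> Rabs (p r1 - p r2) <= L * Rabs (r1 - r2)) ->
  (forall l, (l < d)%nat -> x i l t = x j l t /\ v i l t = v j l t) ->
  forall s, t <= s <= T -> forall l, (l < d)%nat -> x i l s = x j l s.
Proof.
  intros Ht Hi Hj [L [HL Lip]] H0.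
  destruct velocity_bounded as [B [HB0 HB]].
  set (Dx := fun l s => x i l s - x j l s). set (Dv := fun l s => v i l s - v j l s).
  set (En := fun s => rsum d (fun l => Dx l s ^ 2 + Dv l s ^ 2)).
  set (dEn := fun s => rsum d (fun l => 2 * Dx l s * Dv l s
                 + 2 * Dv l s * (accel N d p x v i l s - accel N d p x v j l s))).
  assert (HdEn : forall s, t < s < T -> is_derive En s (dEn s)).
  { intros s Hs. apply (is_derive_rsum d (fun l s => Dx l s ^ 2 + Dv l s ^ 2)). intros l Hl.
    apply (is_derive_plus (fun s => Dx l s ^ 2) (fun s => Dv l s ^ 2)); apply is_derive_sqr.
    - apply (is_derive_minus (x i l) (x j l)); apply is_derive_x; auto; lra.
    - apply (is_derive_minus (v i l) (v j l)); apply is_derive_v; auto; lra. }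
  assert (HEn_cont : forall u, u = t \/ u = T -> cont_within (fun s => t <= s <= T) En u).
  { intros u Hu. apply cont_within_rsum. intros l Hl.
    apply cont_within_plus; apply cont_within_sqr, cont_within_minus;
      (apply cont_within_x || apply cont_within_v); auto; destruct Hu; lra. }
  assert (HEn_t : En t <= 0).
  { right. unfold En. rewrite (rsum_ext d _ (fun _ => 0)); [rewrite rsum_const; ring|].
    intros l Hl. unfold Dx, Dv. destruct (H0 l Hl) as [-> ->]. ring. }
  intros s Hs l Hl.
  assert (HEn : En s <= 0).
  { apply (gronwall_nonpos t T En dEn (1 + 2 * K + 2 * B * L + INR d * (2 * B * L)));
      try (apply HEn_cont); auto; try lra.
    intros u Hu. split; [apply HdEn; lra|].
    apply (pair_energy_rate_le B L); auto. intros k l' Hk Hl'. apply HB; auto; lra. }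
  pose proof (rsum_term_le d (fun l => Dx l s ^ 2 + Dv l s ^ 2) l) as Hterm.
  assert (Dx l s ^ 2 + Dv l s ^ 2 <= 0).
  { eapply Rle_trans; [apply Hterm|exact HEn]; auto.
    intros; apply Rplus_le_le_0_compat; apply pow2_ge_0. }
  pose proof (pow2_ge_0 (Dx l s)). pose proof (pow2_ge_0 (Dv l s)).
  assert (Dx l s = 0) by nra. unfold Dx in *. lra.
Qed.


Definition dist_sqr i j s := rsum d (fun m => (x i m s - x j m s) ^ 2).

(* Away from collisions the right-hand side is a smooth function of the state, so each
   derivative of the solution can be differentiated once more. *)
Lemma Ck_on_solution U : open U -> smooth_on (fun s => 0 < s) p ->
  (forall s, U s -> 0 < s < T) ->
  (forall s i j, U s -> (i < N)%nat -> (j < N)%nat -> i <> j -> 0 < dist_sqr i j s) ->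
  forall k i l, (i < N)%nat -> (l < d)%nat -> Ck_on k U (x i l) /\ Ck_on k U (v i l).
Proof.
  intros hU hp HUT Hsep. induction k as [|k IH]; intros i l Hi Hl; simpl; auto.
  assert (Hw : forall j, (j < N)%nat -> Ck_on k U (weight i j)).
  { intros j Hj. destruct (Nat.eq_dec j i) as [->|Hji].
    - apply (Ck_on_ext U hU k (fun _ => p (enorm d (fun _ => 0)))); [|apply (Ck_on_const U hU)].
      intros s Hs. unfold weight. f_equal. apply enorm_ext. intros; ring.
    - apply (Ck_on_comp U (fun s => 0 < s) hU (open_gt 0) k p); auto.
      + apply (Ck_on_comp U (fun s => 0 < s) hU (open_gt 0) k sqrt); [apply smooth_on_sqrt| |].
        * apply (Ck_on_rsum U hU k d (fun m s => (x i m s - x j m s) ^ 2)). intros m Hm.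
          apply (Ck_on_ext U hU k (fun s => (x i m s - x j m s) * (x i m s - x j m s))); [intros; ring|].
          apply (Ck_on_mult U hU); apply (Ck_on_minus U hU); apply IH; auto.
        * intros s Hs. apply (Hsep s i j); auto.
      + intros s Hs. apply sqrt_lt_R0, (Hsep s i j); auto. }
  split; split.
  - intros s Hs. exists (v i l s). apply is_derive_x; auto.
  - apply (Ck_on_ext U hU k (v i l)); [|apply IH; auto].
    intros s Hs. symmetry. apply is_derive_unique, is_derive_x; auto.
  - intros s Hs. eexists. apply is_derive_v; auto.
  - apply (Ck_on_ext U hU k (fun s => / INR N * rsum N (fun j => (v j l s - v i l s) * weight i j s))).
    + intros s Hs. symmetry. apply is_derive_unique, is_derive_v; auto.
    + apply (Ck_on_scal U hU), (Ck_on_rsum U hU k N (fun j s => (v j l s - v i l s) * weight i j s)).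
      intros j Hj. apply (Ck_on_mult U hU); [apply (Ck_on_minus U hU); apply IH|apply Hw]; auto.
Qed.

Lemma smooth_near_noncollision t : 0 <= t <= T -> smooth_on (fun s => 0 < s) p ->
  (forall i j, (i < N)%nat -> (j < N)%nat -> i <> j -> 0 < enorm d (fun l => x i l t - x j l t)) ->
  exists delta, 0 < delta /\
    forall i l, (i < N)%nat -> (l < d)%nat ->
    forall s, Rabs (s - t) < delta -> 0 < s < T -> forall k, ex_derive_n (x i l) k s.
Proof.
  intros Ht hp Hnc.
  assert (W : within (fun s => 0 <= s <= T) (locally t)
            (fun s => forall i, (i < N)%nat -> forall j, (j < N)%nat -> i <> j -> 0 < dist_sqr i j s)).
  { apply filter_forall_lt. intros i Hi. apply filter_forall_lt. intros j Hj.
    destruct (Nat.eq_dec i j) as [|Hij].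
    - apply (filter_imp (fun _ => True)); [intros; contradiction | apply filter_true].
    - apply (filter_imp (fun s => 0 < dist_sqr i j s)); auto.
      apply cont_within_eventually_pos.
      + apply cont_within_rsum. intros m Hm.
        apply cont_within_sqr, cont_within_minus; apply (cont_within_x 0); auto; lra.
      + pose proof (Hnc i j Hi Hj Hij) as Hpos. unfold enorm in Hpos.
        destruct (Rle_or_lt (dist_sqr i j t) 0) as [Hle|]; auto.
        unfold dist_sqr in Hle. rewrite sqrt_neg_0 in Hpos; lra. }
  destruct W as [eps Heps]. exists eps. split; [apply cond_pos|].
  set (U := fun s => (t - eps < s /\ s < t + eps) /\ (0 < s /\ s < T)).
  assert (hU : open U) by (apply open_and; apply open_and; try apply open_gt; apply open_lt).
  intros i l Hi Hl s Hs Hs' k.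
  apply (ex_derive_n_of_smooth_on U hU); [intros k0; apply Ck_on_solution; auto|].
  - intros u Hu. unfold U in Hu. lra.
  - intros u i0 j0 Hu Hi0 Hj0 Hij. unfold U in Hu. apply Heps; auto; [|lra].
    unfold ball; simpl. unfold AbsRing_ball, abs, minus, plus, opp; simpl.
    apply Rabs_lt_between. lra.
  - unfold U. apply Rabs_lt_between in Hs. lra.
Qed.

End Solution.

Theorem proposition2p2 (N d : nat) (T alpha : R)
  (hN : (1 <= N)%nat) (hd : (1 <= d)%nat) (hT : 0 < T) (halpha : 0 < alpha < 1)
  (psi : nat -> R -> R)
  (hpsi : forall n, (2 <= n)%nat -> is_psi_n alpha n (psi n))
  (x v : nat -> nat -> nat -> R -> R)
  (hsol : forall n, (2 <= n)%nat -> is_solution N d T (psi n) (x n) (v n)) :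
  (forall n, (2 <= n)%nat ->
    (* 1. smoothness near non-collision times *)
    (forall t, 0 <= t <= T ->
       (forall i j, (i < N)%nat -> (j < N)%nat -> i <> j ->
          0 < enorm d (fun l => x n i l t - x n j l t)) ->
       exists delta, 0 < delta /\
         forall i l, (i < N)%nat -> (l < d)%nat ->
         forall s, Rabs (s - t) < delta -> 0 < s < T ->
         forall k, ex_derive_n (x n i l) k s) /\
    (* 2. conservation of the average velocity *)
    (forall l, (l < d)%nat -> forall t, 0 <= t <= T ->
       / INR N * rsum N (fun i => v n i l t) = / INR N * rsum N (fun i => v n i l 0)) /\
    (* 3. and 5. bound M(n) on velocities and 2 M(n) n on accelerations *)
    (exists M,
       (forall i t, (i < N)%nat -> 0 <= t <= T -> enorm d (fun l => v n i l t) <= M) /\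
       (forall i t, (i < N)%nat -> 0 < t < T ->
          enorm d (fun l => Derive (v n i l) t) <= 2 * M * INR n)) /\
    (* 6. sticking *)
    (forall t i j, 0 <= t <= T -> (i < N)%nat -> (j < N)%nat ->
       (forall l, (l < d)%nat -> x n i l t = x n j l t /\ v n i l t = v n j l t) ->
       forall s, t <= s <= T -> forall l, (l < d)%nat -> x n i l s = x n j l s) /\
    (* 7. flocking is preserved *)
    (forall t, 0 <= t <= T ->
       (forall i j l, (i < N)%nat -> (j < N)%nat -> (l < d)%nat -> v n i l t = v n j l t) ->
       forall i l s, (i < N)%nat -> (l < d)%nat -> t <= s <= T -> v n i l s = v n i l t)) /\
  (* 4. uniform velocity bound under uniformly bounded initial data *)
  ((exists B, forall n i, (2 <= n)%nat -> (i < N)%nat ->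
       enorm d (fun l => x n i l 0) <= B /\ enorm d (fun l => v n i l 0) <= B) ->
   exists M, forall n i t, (2 <= n)%nat -> (i < N)%nat -> 0 <= t <= T ->
       enorm d (fun l => v n i l t) <= M).
Proof.
  split.
  - intros n hn. pose proof (hpsi n hn) as hp. pose proof (hsol n hn) as hs.
    pose proof (psi_n_range alpha n (psi n) halpha hn hp) as hrange.
    assert (hsmooth : smooth_on (fun s => 0 < s) (psi n)).
    { apply smooth_on_of_ex_derive_n. apply hp. }
    split; [|split; [|split; [|split]]].
    + intros t Ht. now apply (smooth_near_noncollision N d T (psi n) (x n) (v n) hs).
    + intros l Hl t Ht. now apply (mean_velocity_const N d T (psi n) (x n) (v n) hs).
    + now apply (velocity_accel_bounds N d T (psi n) (x n) (v n) hN hs (INR n)).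
    + intros t i j Ht Hi Hj. apply (collision_sticks N d T (psi n) (x n) (v n) hN hs (INR n)); auto.
      now apply (psi_n_lipschitz alpha n).
    + intros t Ht. now apply (flocking_persists N d T (psi n) (x n) (v n) hN hs (INR n)).
  - intros [B HB]. exists (sqrt (INR d) * B). intros n i t hn Hi Ht.
    assert (HB0 : 0 <= B).
    { destruct (HB 2%nat 0%nat (le_n 2) ltac:(lia)) as [_ H2].
      pose proof (enorm_ge0 d (fun l => v 2%nat 0%nat l 0)). lra. }
    apply enorm_le_coord_bound; auto. intros l Hl.
    apply (velocity_abs_le N d T (psi n) (x n) (v n) hN (hsol n hn) (INR n)); auto.
    + exact (psi_n_range alpha n _ halpha hn (hpsi n hn)).
    + intros k l' Hk Hl'. eapply Rle_trans; [apply (Rabs_coord_le_enorm d (fun l => v n k l 0)); auto|].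
      apply HB; auto.
Qed.
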